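(* Assume the standing assumptions and, in addition, that $g$ is real-valued on all of $\mathbb{R}^m$ and differentiable with $\frac1\kappa$-Lipschitz continuous gradient for some $\kappa>0$ (so $\theta_\rho$ is $\kappa$-strongly convex). Suppose $(D)$ has an optimal solution $p^*$ (a minimizer of $\theta$). Let $\rho>0$ and let $(p_k)_{k\ge0}$ be generated by the fast gradient method applied to $\theta_\rho$. Then for all $k\ge0$, $$\theta(p_k)-\theta(p^* )\le\rho D_f+2\bigl(\theta(0)-\theta(p^* )+\rho D_f\bigr)e^{-k\sqrt{\kappa/L(\rho)}},$$ $$\|\nabla\theta_\rho(p_k)\|\le2\sqrt{L(\rho)\bigl(\theta(0)-\theta(p^* )+\rho D_f\bigr)}\,e^{-\frac k2\sqrt{\kappa/L(\rho)}} .$$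
   Context: Standing assumptions: $\mathcal{H}$ is a real Hilbert space; $f:\mathcal{H}\to\mathbb{R}\cup\{+\infty\}$ is proper, convex, lower semicontinuous with bounded effective domain; $g:\mathbb{R}^m\to\mathbb{R}\cup\{+\infty\}$ is proper, lower semicontinuous and $\mu$-strongly convex for some $\mu>0$; $A:\mathcal{H}\to\mathbb{R}^m$ is linear and continuous with $A(\operatorname{dom} f)\cap\operatorname{dom} g\neq\emptyset$. $(D)$ is $\sup_p\{-f^*(A^*p)-g^*(-p)\}$. $D_f:=\sup\{\tfrac12\|x\|^2:x\in\operatorname{dom} f\}$. $\theta(p):=f^*(A^*p)+g^*(-p)$. $f_\rho^*(q):=\sup_x\{\langle q,x\rangle-f(x)-\frac\rho2\|x\|^2\}$, $\theta_\rho(p):=f_\rho^*(A^*p)+g^*(-p)$, and $L(\rho):=\frac{\|A\|^2}{\rho}+\frac1\mu$ (a Lipschitz constant of $\nabla\theta_\rho$). Fast gradient method on $\theta_\rho$ with strong convexity parameter $\kappa$: $w_0=p_0=0$, $p_{k+1}=w_k-\frac{1}{L(\rho)}\nabla\theta_\rho(w_k)$, $w_{k+1}=p_{k+1}+\frac{\sqrt{L(\rho)}-\sqrt\kappa}{\sqrt{L(\rho)}+\sqrt\kappa}(p_{k+1}-p_k)$. *)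

From mathcomp Require Import ssreflect ssrbool eqtype ssrnat seq fintype.
From Stdlib Require Import Reals Lra Classical ClassicalEpsilon
  FunctionalExtensionality.
Open Scope R_scope.

Set Implicit Arguments.

Record PreHilbert := {
  pt :> Type;
  zero : pt;
  add : pt -> pt -> pt;
  opp : pt -> pt;
  scal : R -> pt -> pt;
  inner : pt -> pt -> R;
  add_assoc : forall x y z, add x (add y z) = add (add x y) z;
  add_comm : forall x y, add x y = add y x;
  add_0_l : forall x, add zero x = x;
  add_opp_r : forall x, add x (opp x) = zero;
  scal_1 : forall x, scal 1 x = x;
  scal_assoc : forall a b x, scal a (scal b x) = scal (a * b) x;
  scal_distr_l : forall a x y, scal a (add x y) = add (scal a x) (scal a y);
  scal_distr_r : forall a b x, scal (a + b) x = add (scal a x) (scal b x);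
  inner_sym : forall x y, inner x y = inner y x;
  inner_add_l : forall x y z, inner (add x y) z = inner x z + inner y z;
  inner_scal_l : forall a x y, inner (scal a x) y = a * inner x y;
  inner_pos : forall x, 0 <= inner x x;
  inner_def : forall x, inner x x = 0 -> x = zero
}.
Arguments zero {_}.
Arguments add {_} _ _.
Arguments opp {_} _.
Arguments scal {_} _ _.
Arguments inner {_} _ _.

Definition sub {V : PreHilbert} (x y : V) : V := add x (opp y).
Definition norm {V : PreHilbert} (x : V) : R := sqrt (inner x x).

Definition complete (V : PreHilbert) : Prop :=
  forall u : nat -> V,
    (forall eps, 0 < eps -> exists N, forall n k, (N <= n)%nat -> (N <= k)%nat ->
        norm (sub (u n) (u k)) < eps) ->
    exists l : V, forall eps, 0 < eps -> exists N, forall n, (N <= n)%nat ->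
        norm (sub (u n) l) < eps.

Definition is_Hilbert (V : PreHilbert) : Prop := complete V.

Definition lsum {I : Type} (l : seq I) (f : I -> R) : R :=
  foldr (fun i acc => f i + acc) 0 l.

Lemma lsum_add {I : Type} (l : seq I) f g :
  lsum l (fun i => f i + g i) = lsum l f + lsum l g.
Proof. rewrite /lsum; elim: l => [|a l IH] /=; [lra | rewrite IH; lra]. Qed.

Lemma lsum_scal {I : Type} (l : seq I) a f :
  lsum l (fun i => a * f i) = a * lsum l f.
Proof. rewrite /lsum; elim: l => [|b l IH] /=; [lra | rewrite IH; lra]. Qed.

Lemma lsum_pos {I : Type} (l : seq I) f :
  (forall i, 0 <= f i) -> 0 <= lsum l f.
Proof. move=> H; rewrite /lsum; elim: l => [|b l IH] /=; [lra | have := H b; lra]. Qed.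

Lemma lsum_zero {I : eqType} (l : seq I) f :
  (forall i, 0 <= f i) -> lsum l f = 0 -> forall i, i \in l -> f i = 0.
Proof.
move=> H; elim: l => [|b l IH] //= Hs i; rewrite in_cons.
have Hl := lsum_pos l f H.
rewrite /lsum /= -/(lsum l f) in Hs.
have Hb := H b.
case/orP => [/eqP -> | Hi]; first lra.
apply: IH => //; lra.
Qed.

Section Euclid.
Variable m : nat.
Definition Rm := 'I_m -> R.
Definition Rm_inner (u v : Rm) : R := lsum (enum 'I_m) (fun i => u i * v i).

Definition Euclid : PreHilbert.
refine (@Build_PreHilbert Rm (fun _ => 0) (fun u v i => u i + v i)
  (fun u i => - u i) (fun a u i => a * u i) Rm_inner _ _ _ _ _ _ _ _ _ _ _ _ _).
- move=> x y z; apply: functional_extensionality => i; lra.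
- move=> x y; apply: functional_extensionality => i; lra.
- move=> x; apply: functional_extensionality => i; lra.
- move=> x; apply: functional_extensionality => i; lra.
- move=> x; apply: functional_extensionality => i; lra.
- move=> a b x; apply: functional_extensionality => i; lra.
- move=> a x y; apply: functional_extensionality => i; lra.
- move=> a b x; apply: functional_extensionality => i; lra.
- move=> x y; rewrite /Rm_inner; f_equal; apply: functional_extensionality => i; lra.
- move=> x y z; rewrite /Rm_inner -lsum_add; f_equal;
    apply: functional_extensionality => i; lra.
- move=> a x y; rewrite /Rm_inner -lsum_scal; f_equal;
    apply: functional_extensionality => i; lra.
- move=> x; apply: lsum_pos => i; apply: Rle_0_sqr.
- move=> x H; apply: functional_extensionality => i.
  have := lsum_zero (enum 'I_m) (fun j => x j * x j) (fun j => Rle_0_sqr (x j)) H i.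
  rewrite mem_enum => /(_ isT) Hi. by apply: Rsqr_0_uniq.
Defined.
End Euclid.

(* Supremum of a set of reals (the least upper bound when the set is
   nonempty and bounded above; 0 otherwise -- never used in that case). *)
Definition Rsup (E : R -> Prop) : R :=
  match excluded_middle_informative (bound E /\ exists x, E x) with
  | left H => proj1_sig (completeness E (proj1 H) (proj2 H))
  | right _ => 0
  end.

Definition choose_or {T : Type} (d : T) (P : T -> Prop) : T :=
  match excluded_middle_informative (exists x, P x) with
  | left H => proj1_sig (constructive_indefinite_description P H)
  | right _ => d
  end.

(* Extended-real-valued functions V -> R ∪ {+oo}: None encodes +oo.   *)
Definition extfun (V : Type) := V -> option R.
Definition ext_of {V : Type} (g : V -> R) : extfun V := fun x => Some (g x).

Definition ext_dom {V : Type} (f : extfun V) (x : V) : Prop := exists v, f x = Some v.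
Definition proper {V : Type} (f : extfun V) : Prop := exists x, ext_dom f x.

Definition ext_gt (o : option R) (c : R) : Prop :=
  match o with None => True | Some v => c < v end.

Definition lsc {V : PreHilbert} (f : extfun V) : Prop :=
  forall c x, ext_gt (f x) c ->
    exists d, 0 < d /\ forall y, norm (sub y x) < d -> ext_gt (f y) c.

Definition comb {V : PreHilbert} (t : R) (x y : V) : V :=
  add (scal t x) (scal (1 - t) y).

Definition strongly_convex {V : PreHilbert} (mu : R) (f : extfun V) : Prop :=
  forall x y t vx vy, 0 <= t <= 1 -> f x = Some vx -> f y = Some vy ->
    exists v, f (comb t x y) = Some v /\
      v <= t * vx + (1 - t) * vy - mu / 2 * t * (1 - t) * (norm (sub x y)) ^ 2.
Definition convex {V : PreHilbert} (f : extfun V) : Prop := strongly_convex 0 f.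

Definition bounded_dom {V : PreHilbert} (f : extfun V) : Prop :=
  exists M, forall x, ext_dom f x -> norm x <= M.

Definition linear_map {V W : PreHilbert} (A : V -> W) : Prop :=
  (forall x y, A (add x y) = add (A x) (A y)) /\
  (forall a x, A (scal a x) = scal a (A x)).
Definition continuous_map {V W : PreHilbert} (A : V -> W) : Prop :=
  forall x eps, 0 < eps -> exists d, 0 < d /\
    forall y, norm (sub y x) < d -> norm (sub (A y) (A x)) < eps.

Definition opnorm {V W : PreHilbert} (A : V -> W) : R :=
  Rsup (fun r => exists x, norm x <= 1 /\ r = norm (A x)).

Definition adjoint {V W : PreHilbert} (A : V -> W) (p : W) : V :=
  choose_or zero (fun y => forall x, inner y x = inner p (A x)).

Definition is_gradient_at {V : PreHilbert} (F : V -> R) (x v : V) : Prop :=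
  forall eps, 0 < eps -> exists d, 0 < d /\ forall h, norm h < d ->
    Rabs (F (add x h) - F x - inner v h) <= eps * norm h.
Definition grad {V : PreHilbert} (F : V -> R) (x : V) : V :=
  choose_or zero (is_gradient_at F x).

(* Fenchel conjugate of an R ∪ {+oo}-valued function (finite in all uses) *)
Definition fconj {V : PreHilbert} (f : extfun V) (q : V) : R :=
  Rsup (fun r => exists x v, f x = Some v /\ r = inner q x - v).

Definition conj_rho {V : PreHilbert} (rho : R) (f : extfun V) (q : V) : R :=
  Rsup (fun r => exists x v, f x = Some v /\
                   r = inner q x - v - rho / 2 * (norm x) ^ 2).

Definition D_f_const {V : PreHilbert} (f : extfun V) : R :=
  Rsup (fun r => exists x, ext_dom f x /\ r = / 2 * (norm x) ^ 2).

Definition theta {H E : PreHilbert} (f : extfun H) (g : extfun E) (A : H -> E)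
  (p : E) : R := fconj f (adjoint A p) + fconj g (opp p).
Definition theta_rho {H E : PreHilbert} (rho : R) (f : extfun H) (g : extfun E)
  (A : H -> E) (p : E) : R := conj_rho rho f (adjoint A p) + fconj g (opp p).

Definition Lrho {H E : PreHilbert} (A : H -> E) (mu rho : R) : R :=
  (opnorm A) ^ 2 / rho + / mu.

Fixpoint fgm {E : PreHilbert} (F : E -> R) (L kappa : R) (k : nat) : E * E :=
  match k with
  | O => (zero, zero)
  | S k' =>
      let (p, w) := fgm F L kappa k' in
      let p' := sub w (scal (/ L) (grad F w)) in
      (p', add p' (scal ((sqrt L - sqrt kappa) / (sqrt L + sqrt kappa)) (sub p' p)))
  end.

(* The smoothing f_rho = f + rho/2 |.|^2 is rho-strongly convex, so its
   conjugate is (1/rho)-smooth; g is mu-strongly convex with a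
   (1/kappa)-Lipschitz gradient, so g^* is (1/mu)-smooth and kappa-strongly
   convex.  Hence theta_rho admits, at every point p, a vector Gt p with
     theta_rho p + <Gt p, d> + kappa/2 |d|^2 <= theta_rho (p + d)
                                <= theta_rho p + <Gt p, d> + L/2 |d|^2,
   so Gt p is its gradient.  For any function with such two-sided quadratic
   bounds Nesterov's estimate-sequence argument gives the linear rate
   (1 - sqrt (kappa/L))^k <= exp (- k sqrt (kappa/L)).  The two estimates of
   the theorem then follow from the sandwich
   theta_rho <= theta <= theta_rho + rho D_f. *)

From mathcomp Require Import ssreflect ssrbool eqtype ssrnat seq fintype.
From Stdlib Require Import Reals Lra ClassicalEpsilon
  FunctionalExtensionality PropExtensionality.
Open Scope R_scope.

Set Implicit Arguments.
Unset Strict Implicit.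

Arguments add_assoc {_} _ _ _.
Arguments add_comm {_} _ _.
Arguments add_0_l {_} _.
Arguments add_opp_r {_} _.
Arguments scal_1 {_} _.
Arguments scal_distr_r {_} _ _ _.
Arguments inner_sym {_} _ _.
Arguments inner_add_l {_} _ _ _.
Arguments inner_scal_l {_} _ _ _.
Arguments inner_pos {_} _.
Arguments inner_def {_} _ _.

Section PreHilbertAlgebra.
Variable V : PreHilbert.
Implicit Types x y z : V.

Lemma inner_add_r x y z : inner x (add y z) = inner x y + inner x z.
Proof. rewrite inner_sym inner_add_l (inner_sym y) (inner_sym z); lra. Qed.

Lemma inner_scal_r a x y : inner x (scal a y) = a * inner x y.
Proof. rewrite inner_sym inner_scal_l (inner_sym y); lra. Qed.

Lemma inner_zero_l x : inner zero x = 0.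
Proof. have := inner_add_l zero zero x. rewrite add_0_l. lra. Qed.

Lemma inner_zero_r x : inner x zero = 0.
Proof. rewrite inner_sym; apply inner_zero_l. Qed.

Lemma inner_opp_l x y : inner (opp x) y = - inner x y.
Proof. have := inner_add_l x (opp x) y. rewrite add_opp_r inner_zero_l. lra. Qed.

Lemma inner_opp_r x y : inner x (opp y) = - inner x y.
Proof. rewrite inner_sym inner_opp_l inner_sym; lra. Qed.

Lemma add_0_r x : add x zero = x.
Proof. by rewrite add_comm add_0_l. Qed.

Lemma add_sub x y : add x (sub y x) = y.
Proof. by rewrite /sub (add_comm y) add_assoc add_opp_r add_0_l. Qed.

Lemma sub_eq0 x y : sub x y = zero -> x = y.
Proof. by move=> H; rewrite -(add_sub y x) H add_0_r. Qed.

Lemma double_zero x : add x x = x -> x = zero.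
Proof.
move=> H. have E : add (add x x) (opp x) = add x (opp x) by rewrite H.
by rewrite -add_assoc !add_opp_r add_0_r in E.
Qed.

Lemma scal_0 x : scal 0 x = zero.
Proof. apply double_zero. by rewrite -scal_distr_r Rplus_0_r. Qed.

Lemma inner_ext y y' : (forall x, inner y x = inner y' x) -> y = y'.
Proof.
move=> H. apply sub_eq0, inner_def.
rewrite /sub inner_add_l !inner_add_r !inner_opp_l !inner_opp_r (H y) (H y').
ring.
Qed.

Lemma norm_sq x : norm x ^ 2 = inner x x.
Proof. rewrite /norm /= Rmult_1_r sqrt_sqrt //; apply inner_pos. Qed.

Lemma norm_nonneg x : 0 <= norm x.
Proof. apply sqrt_pos. Qed.

Lemma norm_zero_eq x : norm x = 0 -> x = zero.
Proof. move=> H. apply inner_def. rewrite -norm_sq H; lra. Qed.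

Lemma norm_zero : norm (zero : V) = 0.
Proof. by rewrite /norm inner_zero_l sqrt_0. Qed.

(* Cauchy-Schwarz, from 0 <= |x - t y|^2 at the optimal t *)
Lemma cauchy_schwarz x y : Rabs (inner x y) <= norm x * norm y.
Proof.
have Hx := inner_pos x; have Hy := inner_pos y.
suff H2 : (inner x y) ^ 2 <= inner x x * inner y y.
  rewrite -sqrt_Rsqr_abs /norm -sqrt_mult_alt //.
  apply sqrt_le_1_alt. rewrite /Rsqr. nra.
case: (Req_dec (inner y y) 0) => Hy0.
  have -> : y = zero by apply inner_def.
  rewrite !inner_zero_r; nra.
have H := inner_pos (add x (scal (- (inner x y / inner y y)) y)).
rewrite inner_add_l !inner_add_r !inner_scal_l !inner_scal_r (inner_sym y x) in H.
have Hp : 0 < inner y y by lra.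
set c := inner x y in H *. set d := inner y y in H Hp *.
have -> : c ^ 2 = inner x x * d - d * (inner x x + - (c / d) * c
      + (- (c / d) * c + - (c / d) * (- (c / d) * d))) by field; lra.
have : 0 <= d * (inner x x + - (c / d) * c
      + (- (c / d) * c + - (c / d) * (- (c / d) * d))) by apply Rmult_le_pos; lra.
lra.
Qed.

Lemma inner_le_norm x y : inner x y <= norm x * norm y.
Proof. have := cauchy_schwarz x y. have := Rle_abs (inner x y). lra. Qed.

Lemma norm_scal a x : norm (scal a x) = Rabs a * norm x.
Proof.
rewrite /norm inner_scal_l inner_scal_r -Rmult_assoc sqrt_mult_alt.
  by rewrite -sqrt_Rsqr_abs /Rsqr.
apply Rle_0_sqr.
Qed.

Lemma norm_opp x : norm (opp x) = norm x.
Proof. rewrite /norm inner_opp_l inner_opp_r; f_equal; ring. Qed.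

(* triangle inequality, squared form of Cauchy-Schwarz *)
Lemma norm_triangle x y : norm (add x y) <= norm x + norm y.
Proof.
apply Rsqr_incr_0_var; last by apply Rplus_le_le_0_compat; apply norm_nonneg.
have -> : Rsqr (norm (add x y)) = norm (add x y) ^ 2 by rewrite /Rsqr; ring.
rewrite /Rsqr norm_sq.
rewrite inner_add_l !inner_add_r (inner_sym y x).
have := inner_le_norm x y. have := norm_sq x. have := norm_sq y. nra.
Qed.

Lemma norm_sub_sym x y : norm (sub x y) = norm (sub y x).
Proof.
rewrite /norm /sub !inner_add_l !inner_add_r !inner_opp_l !inner_opp_r.
by rewrite (inner_sym y x); f_equal; ring.
Qed.

Lemma norm_diff x y : Rabs (norm y - norm x) <= norm (sub y x).
Proof.
have H1 : norm y <= norm x + norm (sub y x).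
  by rewrite -{1}(add_sub x y); apply norm_triangle.
have H2 : norm x <= norm y + norm (sub x y).
  by rewrite -{1}(add_sub y x); apply norm_triangle.
rewrite norm_sub_sym in H2. apply Rabs_le. lra.
Qed.

Lemma norm_lt_of_sq x d : 0 < d -> norm x ^ 2 < d ^ 2 -> norm x < d.
Proof. move=> Hd H. have := norm_nonneg x. nra. Qed.

Lemma norm_le_of_sq x d : 0 <= d -> norm x ^ 2 <= d ^ 2 -> norm x <= d.
Proof. move=> Hd H. have := norm_nonneg x. nra. Qed.

Lemma norm_comb_sq t x y : norm (comb t x y) ^ 2 =
  t * norm x ^ 2 + (1 - t) * norm y ^ 2 - t * (1 - t) * norm (sub x y) ^ 2.
Proof.
rewrite !norm_sq /comb /sub.
rewrite !inner_add_l !inner_add_r !inner_scal_l !inner_scal_r !inner_opp_l !inner_opp_r.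
rewrite !(inner_sym y x). ring.
Qed.

End PreHilbertAlgebra.

#[global] Hint Rewrite @inner_add_l @inner_add_r @inner_scal_l @inner_scal_r
  @inner_opp_l @inner_opp_r @inner_zero_l @inner_zero_r : inner_bilin.
Ltac inner_expand := unfold sub, comb in *; autorewrite with inner_bilin.

Lemma Rsup_spec E : bound E -> (exists x, E x) -> is_lub E (Rsup E).
Proof.
move=> Hb He. rewrite /Rsup.
case: (excluded_middle_informative _) => [Hc|Hc]; last by exfalso; apply Hc.
by case: (completeness _ _ _).
Qed.

Lemma Rsup_ub E x : bound E -> E x -> x <= Rsup E.
Proof. move=> Hb Hx. by apply (proj1 (Rsup_spec Hb (ex_intro _ x Hx))). Qed.

Lemma Rsup_lub E B : (exists x, E x) -> (forall x, E x -> x <= B) -> Rsup E <= B.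
Proof. move=> He HB. by apply (proj2 (Rsup_spec (ex_intro _ B HB) He)). Qed.

Lemma Rsup_max E a : E a -> (forall x, E x -> x <= a) -> Rsup E = a.
Proof.
move=> Ha HB. apply Rle_antisym; first by apply Rsup_lub => //; exists a.
by apply Rsup_ub => //; exists a.
Qed.

Lemma Rsup_ext (E E' : R -> Prop) : (forall r, E r <-> E' r) -> Rsup E = Rsup E'.
Proof.
move=> H.
by have -> : E = E' by apply functional_extensionality => r; apply propositional_extensionality.
Qed.

Lemma inv_succ_small e : 0 < e -> exists N : nat, forall k, (N <= k)%nat -> / (INR k + 1) < e.
Proof.
move=> He. have [N [HN HN0]] := archimed_cor1 e He. exists N => k Hk.
have HNk : INR N <= INR k by apply le_INR; apply/leP.
have HN0' : 0 < INR N by apply lt_0_INR.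
apply Rle_lt_trans with (/ INR N) => //. apply Rinv_le_contravar; lra.
Qed.

Lemma le_of_scaled_le a b : 0 <= b -> (forall t, 0 < t < 1 -> (1 - t) * b <= a) -> b <= a.
Proof.
move=> Hb H. apply Rnot_lt_le => Hlt.
case: (Rlt_le_dec a 0) => Ha; first by have := H (1/2) ltac:(lra); nra.
have Hb0 : 0 < b by lra.
have Ht : 0 < (b - a) / (2 * b) < 1.
  split; first by apply Rdiv_lt_0_compat; lra.
  apply Rmult_lt_reg_r with (2 * b); [lra|]; field_simplify; lra.
have := H _ Ht.
have -> : (1 - (b - a) / (2 * b)) * b = (a + b) / 2 by field; lra.
lra.
Qed.

Section StronglyConvex.
Variable V : PreHilbert.
Implicit Types x y z q h : V.

Definition contf (c : V -> R) : Prop := forall x eps, 0 < eps -> exists d, 0 < d /\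
  forall y, norm (sub y x) < d -> Rabs (c y - c x) < eps.

Definition addc (f : extfun V) (c : V -> R) : extfun V :=
  fun x => match f x with Some v => Some (v + c x) | None => None end.

Lemma proper_addc f c : proper f -> proper (addc f c).
Proof. move=> [x [v Hv]]. exists x. rewrite /ext_dom /addc Hv. by eexists. Qed.

Lemma lsc_addc f c : lsc f -> contf c -> lsc (addc f c).
Proof.
move=> Hf Hc C x. rewrite /addc => H.
(* a level a below f x and a margin eta on c such that a < v, c x - eta < w give C < v + w *)
have [a [eta [Heta [Ha Hae]]]] : exists a eta, 0 < eta /\ ext_gt (f x) a /\
    forall v, a < v -> forall w, c x - eta < w -> C < v + w.
  move: H; case: (f x) => [v|] /= H.
  - exists (v - (v + c x - C) / 2), ((v + c x - C) / 2).
    repeat split; try lra. move=> v' H1 w H2. lra.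
  - exists (C - c x + 1), 1. repeat split; try lra. move=> v' H1 w H2; lra.
have [d1 [Hd1 H1]] := Hf a x Ha.
have [d2 [Hd2 H2]] := Hc x eta Heta.
exists (Rmin d1 d2). split; first by apply Rmin_pos.
move=> y Hy.
have := H1 y ltac:(have := Rmin_l d1 d2; lra).
have := H2 y ltac:(have := Rmin_r d1 d2; lra).
case: (f y) => [v|] //= Hcy Hv. apply Hae => //.
have := Rabs_def2 _ _ Hcy. lra.
Qed.

Lemma sc_addc mu nu f c : strongly_convex mu f ->
  (forall x y t, 0 <= t <= 1 -> c (comb t x y) <=
     t * c x + (1 - t) * c y - nu / 2 * t * (1 - t) * norm (sub x y) ^ 2) ->
  strongly_convex (mu + nu) (addc f c).
Proof.
move=> Hf Hc x y t vx vy Ht. rewrite /addc.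
case Ex: (f x) => [ux|] //; case Ey: (f y) => [uy|] // [<-] [<-].
have [v [Hv Hle]] := Hf x y t ux uy Ht Ex Ey.
exists (v + c (comb t x y)). rewrite Hv. split => //.
have := Hc x y t Ht. lra.
Qed.

Lemma contf_opp c : contf c -> contf (fun x => - c x).
Proof.
move=> H x e He. have [d [Hd Hy]] := H x e He. exists d; split => // y Hy'.
have -> : - c y - - c x = - (c y - c x) by ring.
rewrite Rabs_Ropp. by apply Hy.
Qed.

Lemma contf_inner q : contf (fun x => inner q x).
Proof.
move=> x e He. have Hq := norm_nonneg q.
exists (e / (norm q + 1)). split; first by apply Rdiv_lt_0_compat; lra.
move=> y Hy.
have -> : inner q y - inner q x = inner q (sub y x) by inner_expand; ring.
apply Rle_lt_trans with (norm q * norm (sub y x)); first by apply cauchy_schwarz.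
have Hs := norm_nonneg (sub y x).
have : norm (sub y x) * (norm q + 1) < e.
  have -> : e = e / (norm q + 1) * (norm q + 1) by field; lra.
  apply Rmult_lt_compat_r; lra.
nra.
Qed.

Lemma contf_normsq a : contf (fun x => a * norm x ^ 2).
Proof.
move=> x e He. set K := (2 * norm x + 1) * (Rabs a + 1).
have Hx := norm_nonneg x. have Ha := Rabs_pos a.
have HK : 0 < K by rewrite /K; nra.
exists (Rmin 1 (e / K)). split; first by apply Rmin_pos; [lra|apply Rdiv_lt_0_compat].
move=> y Hy. have Hy1 : norm (sub y x) < 1 by have := Rmin_l 1 (e/K); lra.
have Hy2 : norm (sub y x) < e / K by have := Rmin_r 1 (e/K); lra.
have Hd := norm_diff x y. have Hyn := norm_nonneg y.
have -> : a * norm y ^ 2 - a * norm x ^ 2 = a * ((norm y - norm x) * (norm y + norm x)) by ring.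
rewrite !Rabs_mult.
set u := Rabs (norm y - norm x) in Hd *.
have Hu0 : 0 <= u by apply Rabs_pos.
have Hs : Rabs (norm y + norm x) <= 2 * norm x + 1.
  rewrite Rabs_right; last lra. have := Rle_abs (norm y - norm x). rewrite -/u. lra.
have Hs0 := Rabs_pos (norm y + norm x).
have HuK : u * K < e.
  have -> : e = e / K * K by field; lra. apply Rmult_lt_compat_r; lra.
have : Rabs a * (u * Rabs (norm y + norm x)) <= (Rabs a + 1) * (u * (2 * norm x + 1)).
  apply Rmult_le_compat; try lra; first by apply Rmult_le_pos.
  by apply Rmult_le_compat_l.
have -> : (Rabs a + 1) * (u * (2 * norm x + 1)) = u * K by rewrite /K; ring.
lra.
Qed.

Lemma square_completion r mu d : 0 < mu -> 0 < d ->
  - (4 / (mu * d ^ 2)) <= - (2 * r / d) + mu / 4 * r ^ 2.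
Proof.
move=> Hmu Hd.
have : - (2 * r / d) + mu / 4 * r ^ 2 + 4 / (mu * d ^ 2) = mu / 4 * (r - 4 / (mu * d)) ^ 2.
  field; lra.
have : 0 <= mu / 4 * (r - 4 / (mu * d)) ^ 2 by apply Rmult_le_pos; [lra | apply pow2_ge_0].
lra.
Qed.

Lemma sc_bounded_below F mu : 0 < mu -> strongly_convex mu F -> lsc F -> proper F ->
  exists K, forall y b, F y = Some b -> K <= b.
Proof.
move=> Hmu Hsc Hlsc [x0 [a Ha]].
have [d [Hd Hball]] := Hlsc (a - 1) x0 ltac:(rewrite Ha /=; lra).
have HK : 0 < 4 / (mu * d ^ 2).
  by apply Rdiv_lt_0_compat; [lra | apply Rmult_lt_0_compat; [lra | apply pow_lt; lra]].
exists (a - 1 - 4 / (mu * d ^ 2)) => y b Hb. set r := norm (sub y x0).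
case: (Rlt_le_dec r d) => Hr.
  have Hab : a - 1 < b by move: (Hball y Hr); rewrite Hb.
  lra.
(* far from x0: compare with the point at distance d/2 on the segment [y, x0] *)
set t := d / (2 * r).
have Hr0 : 0 < r by lra.
have Ht : 0 < t <= 1/2.
  split; first by apply Rdiv_lt_0_compat; lra.
  rewrite /t. apply Rmult_le_reg_r with (2 * r); first lra.
  have -> : d / (2 * r) * (2 * r) = d by field; lra. lra.
have [w [Hw Hwle]] := Hsc y x0 t b a ltac:(lra) Hb Ha.
have Hn : norm (sub (comb t y x0) x0) < d.
  apply norm_lt_of_sq => //.
  have -> : norm (sub (comb t y x0) x0) ^ 2 = t ^ 2 * r ^ 2.
    by rewrite /r !norm_sq; inner_expand; rewrite !(inner_sym x0 y); ring.
  have -> : t ^ 2 * r ^ 2 = (d / 2) ^ 2 by rewrite /t; field; lra. nra.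
have Hw' : a - 1 < w by move: (Hball _ Hn); rewrite Hw.
rewrite -/r in Hwle.
have Htr : 2 * r / d * t = 1 by rewrite /t; field; lra.
have H1 : t * (b - a) > -1 + mu / 2 * t * (1 - t) * r ^ 2 by lra.
have H2 : b - a > - (2 * r / d) + mu / 4 * r ^ 2.
  have : b - a > 2 * r / d * (-1 + mu / 2 * t * (1 - t) * r ^ 2).
    apply Rmult_gt_reg_l with t; first lra.
    have -> : t * (2 * r / d * (-1 + mu / 2 * t * (1 - t) * r ^ 2)) =
      -1 + mu / 2 * t * (1 - t) * r ^ 2 by rewrite -Rmult_assoc (Rmult_comm t) Htr; ring.
    lra.
  have -> : 2 * r / d * (-1 + mu / 2 * t * (1 - t) * r ^ 2) =
     - (2 * r / d) + mu / 2 * (1 - t) * r ^ 2 * (2 * r / d * t) by ring.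
  rewrite Htr. have Hr2 := pow2_ge_0 r.
  have : 0 <= mu * r ^ 2 * (1/2 - t) by apply Rmult_le_pos; [apply Rmult_le_pos|]; lra.
  lra.
have := square_completion r Hmu Hd. lra.
Qed.

Lemma sc_minimizing_cauchy F mu I (u : nat -> V) : 0 < mu -> strongly_convex mu F ->
  (forall x v, F x = Some v -> I <= v) ->
  (forall n, exists v, F (u n) = Some v /\ v < I + / (INR n + 1)) ->
  forall eps, 0 < eps -> exists N, forall n k, (N <= n)%nat -> (N <= k)%nat ->
    norm (sub (u n) (u k)) < eps.
Proof.
move=> Hmu Hsc HI Hu eps Heps.
have [N HN] := @inv_succ_small (mu * eps ^ 2 / 8)
  ltac:(apply Rdiv_lt_0_compat; [apply Rmult_lt_0_compat; [lra|apply pow_lt; lra]|lra]).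
exists N => n k Hn Hk.
have [vn [Hvn Hvn']] := Hu n. have [vk [Hvk Hvk']] := Hu k.
(* the midpoint value is at least I *)
have [w [Hw Hwle]] := Hsc (u n) (u k) (1/2) vn vk ltac:(lra) Hvn Hvk.
have := HI _ _ Hw. have := HN n Hn. have := HN k Hk.
have := Rinv_0_lt_compat (INR n + 1) ltac:(have := pos_INR n; lra).
have := Rinv_0_lt_compat (INR k + 1) ltac:(have := pos_INR k; lra).
move=> H1 H2 H3 H4 H5. apply norm_lt_of_sq => //.
have : mu / 8 * norm (sub (u n) (u k)) ^ 2 < mu * eps ^ 2 / 8 by lra.
nra.
Qed.

(* Existence of a minimiser of a strongly convex lsc proper function on a
   complete space: minimising sequences are Cauchy, and lsc passes to the limit. *)
Theorem sc_minimizer F mu : complete V -> 0 < mu -> strongly_convex mu F -> lsc F ->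
  proper F -> exists x0 v0, F x0 = Some v0 /\ forall x v, F x = Some v -> v0 <= v.
Proof.
move=> Hcomp Hmu Hsc Hlsc Hp.
have [K HK] := sc_bounded_below Hmu Hsc Hlsc Hp.
have [x0 [a Ha]] := Hp.
(* I = inf F = - sup (- F) *)
set E := fun r => exists x v, F x = Some v /\ r = - v.
have Eb : bound E by exists (- K) => r [x [v [Hv ->]]]; have := HK _ _ Hv; lra.
set I := - Rsup E.
have HI : forall x v, F x = Some v -> I <= v.
  move=> x v Hv. have := Rsup_ub Eb (ex_intro _ x (ex_intro _ v (conj Hv (Logic.eq_refl _)))).
  rewrite /I; lra.
have Hseq : forall n : nat, exists x v, F x = Some v /\ v < I + / (INR n + 1).
  move=> n. apply NNPP => Hn.
  have : Rsup E <= - (I + / (INR n + 1)).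
    apply Rsup_lub; first by exists (- a), x0, a.
    move=> r [x [v [Hv ->]]]. apply Ropp_le_contravar, Rnot_lt_le => Hlt.
    by apply Hn; exists x, v.
  have := Rinv_0_lt_compat (INR n + 1) ltac:(have := pos_INR n; lra).
  rewrite /I; lra.
have [u Hu] := choice _ Hseq.
have [l Hl] := Hcomp u (sc_minimizing_cauchy Hmu Hsc HI Hu).
(* no level c > I lies below F l: lsc at l would contradict F (u n) -> I *)
have Hlim : forall c, ext_gt (F l) c -> I < c -> False.
  move=> c Hc HcI.
  have [d1 [Hd1 Hb1]] := Hlsc c l Hc.
  have [N1 HN1] := Hl d1 Hd1.
  have [N2 HN2] := @inv_succ_small (c - I) ltac:(lra).
  have [vn [Hvn Hvn']] := Hu (maxn N1 N2).
  have := Hb1 _ (HN1 _ (leq_maxl N1 N2)). rewrite Hvn /=.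
  have := HN2 _ (leq_maxr N1 N2). lra.
case El : (F l) => [v|]; last by exfalso; by apply: (Hlim (I + 1)); rewrite ?El //; lra.
exists l, v. split => // x w Hw. have := HI _ _ Hw.
have : v <= I.
  apply Rnot_lt_le => Hlt. apply: (Hlim ((I + v) / 2)); rewrite ?El /=; lra.
lra.
Qed.

Theorem sc_growth F mu x0 v0 : strongly_convex mu F -> F x0 = Some v0 ->
  (forall x v, F x = Some v -> v0 <= v) ->
  forall x v, F x = Some v -> v0 + mu / 2 * norm (sub x x0) ^ 2 <= v.
Proof.
move=> Hsc H0 Hmin x v Hv.
have Hn := pow2_ge_0 (norm (sub x x0)).
case: (Rle_lt_dec mu 0) => Hmu; first by have := Hmin x v Hv; nra.
suff : mu / 2 * norm (sub x x0) ^ 2 <= v - v0 by lra.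
apply le_of_scaled_le; first by nra.
move=> t Ht.
have [w [Hw Hwle]] := Hsc x x0 t v v0 ltac:(lra) Hv H0.
have Hw0 := Hmin _ _ Hw.
apply Rmult_le_reg_l with t; lra.
Qed.

Theorem sc_linear_max phi mu (l : V -> R) : complete V -> 0 < mu ->
  strongly_convex mu phi -> lsc phi -> proper phi ->
  (forall x y, l (add x y) = l x + l y) -> (forall a x, l (scal a x) = a * l x) ->
  contf l ->
  exists x0 a, phi x0 = Some a /\
    forall x v, phi x = Some v -> l x - v + mu / 2 * norm (sub x x0) ^ 2 <= l x0 - a.
Proof.
move=> Hc Hmu Hsc Hlsc Hp Hadd Hscal Hcont.
set F := addc phi (fun x => - l x).
have HF : strongly_convex mu F.
  rewrite -(Rplus_0_r mu). apply sc_addc => // x y t Ht.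
  rewrite /comb Hadd !Hscal. lra.
have [x0 [v0 [H0 Hmin]]] :=
  sc_minimizer Hc Hmu HF (lsc_addc Hlsc (contf_opp Hcont)) (proper_addc _ Hp).
move: (H0); rewrite /F /addc. case E0: (phi x0) => [a|] // [Hv0].
exists x0, a; split => // x v Hv.
have Fx : F x = Some (v + - l x) by rewrite /F /addc Hv.
have := sc_growth HF H0 Hmin Fx. lra.
Qed.

(* Riesz representation of continuous linear forms on a complete space,
   obtained by maximising l x - |x|^2 / 2. *)
Theorem riesz (l : V -> R) : complete V ->
  (forall x y, l (add x y) = l x + l y) -> (forall a x, l (scal a x) = a * l x) ->
  contf l -> exists y, forall x, inner y x = l x.
Proof.
move=> Hc Hadd Hscal Hcont.
set phi := addc (fun _ : V => Some 0) (fun x => / 2 * norm x ^ 2).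
have Hsc : strongly_convex 1 phi.
  rewrite -(Rplus_0_l 1). apply sc_addc.
    move=> x y t vx vy Ht [<-] [<-]. exists 0; split => //. lra.
  move=> x y t Ht. rewrite norm_comb_sq. lra.
have Hlsc : lsc phi.
  apply lsc_addc; last by apply contf_normsq.
  move=> c x /= Hc0. exists 1; split => //; lra.
have Hp : proper phi by exists zero; rewrite /ext_dom /phi /addc; eexists.
have [x0 [a [Ha Hb]]] := sc_linear_max Hc Rlt_0_1 Hsc Hlsc Hp Hadd Hscal Hcont.
exists x0 => h.
move: Ha; rewrite /phi /addc norm_sq => -[Ha].
(* optimality along the line x0 + t h forces l h = <x0, h> *)
have key : forall t, t * (l h - inner x0 h) <= 0.
  move=> t.
  have := Hb (add x0 (scal t h)) (0 + / 2 * norm (add x0 (scal t h)) ^ 2) (Logic.eq_refl _).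
  rewrite Hadd Hscal -Ha !norm_sq. inner_expand. rewrite (inner_sym h x0). lra.
have := key 1. have := key (-1). lra.
Qed.

End StronglyConvex.

Section StronglyConvexConjugate.
Variables (V : PreHilbert) (phi : extfun V) (mu : R).
Hypotheses (Hcomp : complete V) (Hmu : 0 < mu) (Hsc : strongly_convex mu phi)
  (Hlsc : lsc phi) (Hp : proper phi).

Lemma conj_attained (q : V) : exists x0 a, phi x0 = Some a /\ fconj phi q = inner q x0 - a /\
  forall x v, phi x = Some v -> inner q x - v + mu / 2 * norm (sub x x0) ^ 2 <= fconj phi q.
Proof.
have [x0 [a [Ha Hb]]] := sc_linear_max (l := fun x => inner q x) Hcomp Hmu Hsc Hlsc Hp
   (fun x y => inner_add_r q x y) (fun a x => inner_scal_r a q x) (contf_inner q).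
have HS : fconj phi q = inner q x0 - a.
  apply Rsup_max; first by exists x0, a.
  move=> r [x [v [Hv ->]]]. have := Hb x v Hv.
  have : 0 <= mu / 2 * norm (sub x x0) ^ 2 by apply Rmult_le_pos; [lra | apply pow2_ge_0].
  lra.
exists x0, a. split => //. split => // x v Hv. rewrite HS. by apply Hb.
Qed.

Lemma conj_smooth (q : V) : exists x0 a, phi x0 = Some a /\ fconj phi q = inner q x0 - a /\
  (forall x v, phi x = Some v -> inner q x - v + mu / 2 * norm (sub x x0) ^ 2 <= fconj phi q) /\
  forall h, fconj phi q + inner h x0 <= fconj phi (add q h) /\
            fconj phi (add q h) <= fconj phi q + inner h x0 + norm h ^ 2 / (2 * mu).
Proof.
have [x0 [a [Ha [HS Hb]]]] := conj_attained q.
exists x0, a. do 3 (split => //). move=> h.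
have [x1 [a1 [Ha1 [HS1 Hb1]]]] := conj_attained (add q h).
split.
  have := Hb1 x0 a Ha. rewrite inner_add_l.
  have : 0 <= mu / 2 * norm (sub x0 x1) ^ 2 by apply Rmult_le_pos; [lra | apply pow2_ge_0].
  lra.
rewrite HS1 inner_add_l.
have H1 := Hb x1 a1 Ha1.
have H2 : inner h x1 = inner h x0 + inner h (sub x1 x0) by inner_expand; ring.
have H3 := inner_le_norm h (sub x1 x0).
set d := norm (sub x1 x0) in H1 H3. set nh := norm h in H3 *.
(* - mu/2 d^2 + nh d <= nh^2 / (2 mu) *)
have : 0 <= (nh - mu * d) ^ 2 / (2 * mu).
  by apply Rmult_le_pos; [apply pow2_ge_0 | apply Rlt_le, Rinv_0_lt_compat; lra].
have : nh ^ 2 / (2 * mu) - (- (mu / 2 * d ^ 2) + nh * d) = (nh - mu * d) ^ 2 / (2 * mu).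
  field; lra.
lra.
Qed.

End StronglyConvexConjugate.

Lemma lsum_ge (I : eqType) (l : seq I) f i :
  (forall j, 0 <= f j) -> i \in l -> f i <= lsum l f.
Proof.
move=> H; elim: l => [|b l IH] //=. rewrite in_cons => /orP [/eqP ->|Hi].
  have := lsum_pos l f H. rewrite /lsum /=. lra.
have := IH Hi. have := H b. rewrite /lsum /=. lra.
Qed.

Lemma lsum_le (I : Type) (l : seq I) f g : (forall j, f j <= g j) -> lsum l f <= lsum l g.
Proof.
move=> H; elim: l => [|b l IH]; rewrite /lsum /=; first lra.
have := H b. rewrite /lsum in IH. lra.
Qed.

Lemma lsum_const (I : Type) (l : seq I) c : lsum l (fun _ => c) = INR (size l) * c.
Proof.
elim: l => [|b l IH]; rewrite /lsum /=; first lra.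
rewrite /lsum in IH. rewrite IH. case: (size l) => [|n] /=; ring.
Qed.

Section EuclidFacts.
Variable m : nat.

Lemma euclid_coord (x : Euclid m) i : Rabs (x i) <= norm x.
Proof.
rewrite -sqrt_Rsqr_abs /norm. apply sqrt_le_1_alt. rewrite /Rsqr.
apply (@lsum_ge _ _ (fun j => x j * x j)); first by move=> j; apply Rle_0_sqr.
by rewrite mem_enum.
Qed.

Lemma euclid_norm_sq_le (x : Euclid m) eta :
  (forall i, Rabs (x i) <= eta) -> norm x ^ 2 <= INR m * (eta * eta).
Proof.
move=> Hx. rewrite norm_sq.
have -> : INR m * (eta * eta) = lsum (enum 'I_m) (fun _ => eta * eta).
  by rewrite lsum_const size_enum_ord.
apply lsum_le => j. have := Hx j. have := Rabs_pos (x j).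
rewrite -[x j * x j]/(Rsqr (x j)) Rsqr_abs /Rsqr. nra.
Qed.

(* R^m is complete: coordinatewise Cauchy limits are uniform over the m
   coordinates *)
Lemma euclid_complete : complete (Euclid m).
Proof.
move=> u Hu.
have Hci : forall i, Cauchy_crit (fun n => u n i).
  move=> i eps Heps. have [N HN] := Hu eps Heps. exists N => n k Hn Hk.
  have := euclid_coord (sub (u n) (u k)) i. rewrite /R_dist.
  have := HN n k (introT leP Hn) (introT leP Hk). rewrite /sub /Rminus /=. lra.
set l := fun i => proj1_sig (R_complete _ (Hci i)).
have Hl : forall i, Un_cv (fun n => u n i) (l i).
  by move=> i; rewrite /l; case: (R_complete _ _).
have Hunif : forall (s : seq 'I_m) eta, 0 < eta -> exists N, forall n, (N <= n)%nat ->
   forall j, j \in s -> Rabs (u n j - l j) < eta.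
  elim=> [|b s IH] eta He; first by exists 0%nat.
  have [N1 HN1] := IH eta He. have [N2 HN2] := Hl b eta He.
  exists (maxn N1 N2) => n Hn j. rewrite in_cons => /orP [/eqP ->|Hj].
    apply: HN2. apply/leP. apply: leq_trans Hn. apply leq_maxr.
  apply HN1 => //. apply: leq_trans Hn. apply leq_maxl.
exists (l : Euclid m) => eps Heps.
have Hm := pos_INR m.
set eta := eps / (INR m + 1).
have Heta : 0 < eta by apply Rdiv_lt_0_compat; lra.
have [N HN] := Hunif (enum 'I_m) eta Heta.
exists N => n Hn. apply norm_lt_of_sq => //.
apply Rle_lt_trans with (INR m * (eta * eta)).
  apply euclid_norm_sq_le => j.
  have := HN n Hn j. rewrite mem_enum /sub /Rminus /= => /(_ isT). lra.
have -> : INR m * (eta * eta) = eps ^ 2 * (INR m / (INR m + 1) ^ 2).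
  by rewrite /eta; field; lra.
have : INR m / (INR m + 1) ^ 2 < 1.
  apply Rmult_lt_reg_r with ((INR m + 1) ^ 2); first nra. field_simplify; nra.
have := pow_lt eps 2 Heps. nra.
Qed.

Lemma euclid0_eq (x y : Euclid m) : m = 0%nat -> x = y.
Proof.
move=> Hm. apply functional_extensionality => -[i Hi]. exfalso. by move: Hi; rewrite Hm.
Qed.

Lemma euclid_nonzero : (0 < m)%nat -> exists h : Euclid m, 0 < inner h h.
Proof.
move=> Hm. set h : Euclid m := fun _ => 1. exists h.
have H := inner_pos h.
case: (Req_dec (inner h h) 0) => H0; last lra.
have := f_equal (fun h : Euclid m => h (Ordinal Hm)) (inner_def h H0).
rewrite /h /=. lra.
Qed.

End EuclidFacts.

Section Operators.
Variables (H W : PreHilbert) (A : H -> W).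
Hypotheses (Hlin : linear_map A) (Hcont : continuous_map A).

Lemma linear_zero : A zero = zero.
Proof. apply double_zero. by rewrite -(proj1 Hlin) add_0_l. Qed.

(* continuity at 0 bounds A on the unit ball, so opnorm A is a genuine
   supremum *)
Lemma opnorm_set_bound : bound (fun r => exists x, norm x <= 1 /\ r = norm (A x)).
Proof.
have [d [Hd Hb]] := @Hcont zero 1 Rlt_0_1.
have Hsub0 : forall y : W, sub y zero = y by move=> y; apply inner_ext => z; inner_expand; ring.
have Hsub0' : forall y : H, sub y zero = y by move=> y; apply inner_ext => z; inner_expand; ring.
exists (2 / d) => r [x [Hx ->]].
have := Hb (scal (d / 2) x).
rewrite Hsub0' linear_zero Hsub0 (proj2 Hlin) !norm_scal Rabs_right; last lra.
have := norm_nonneg x. have := norm_nonneg (A x). move=> H1 H2 H3.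
have {H3} H3 := H3 ltac:(nra).
apply Rmult_le_reg_l with (d / 2); first lra.
have -> : d / 2 * (2 / d) = 1 by field; lra. lra.
Qed.

Lemma opnorm_nonneg : 0 <= opnorm A.
Proof.
apply Rsup_ub; first by apply opnorm_set_bound.
exists zero. rewrite linear_zero !norm_zero. split; lra.
Qed.

Lemma opnorm_bound x : norm (A x) <= opnorm A * norm x.
Proof.
case: (Req_dec (norm x) 0) => Hx.
  rewrite (norm_zero_eq Hx) linear_zero !norm_zero. lra.
have Hpos : 0 < norm x by have := norm_nonneg x; lra.
have Hi : Rabs (/ norm x) = / norm x by apply Rabs_right, Rle_ge, Rlt_le, Rinv_0_lt_compat.
have : norm (A (scal (/ norm x) x)) <= opnorm A.
  apply Rsup_ub; first by apply opnorm_set_bound.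
  exists (scal (/ norm x) x). split => //. rewrite norm_scal Hi Rinv_l; lra.
rewrite (proj2 Hlin) norm_scal Hi => H1.
have := Rmult_le_compat_l (norm x) _ _ (Rlt_le _ _ Hpos) H1.
rewrite -Rmult_assoc Rinv_r; lra.
Qed.

Hypothesis Hcomp : complete H.

(* on a Hilbert space the adjoint exists by Riesz: <A^* p, x> = <p, A x> *)
Lemma adjoint_spec p x : inner (adjoint A p) x = inner p (A x).
Proof.
have [y Hy] : exists y, forall x, inner y x = inner p (A x).
  apply riesz => //.
  - move=> x1 x2. by rewrite (proj1 Hlin) inner_add_r.
  - move=> a x1. by rewrite (proj2 Hlin) inner_scal_r.
  - move=> x1 e He.
    have [d1 [Hd1 H1]] := contf_inner p (A x1) He.
    have [d2 [Hd2 H2]] := Hcont x1 Hd1.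
    exists d2; split => // y Hy. exact: H1 _ (H2 y Hy).
rewrite /adjoint /choose_or. case: (excluded_middle_informative _) => [Hc|Hc].
  by case: (constructive_indefinite_description _ _) => y' /= ->.
by exfalso; apply Hc; exists y.
Qed.

Lemma adjoint_add p d : adjoint A (add p d) = add (adjoint A p) (adjoint A d).
Proof. apply inner_ext => x. by rewrite inner_add_l !adjoint_spec inner_add_l. Qed.

(* |A^* d| <= |A| |d|, from |A^* d|^2 = <d, A A^* d> *)
Lemma adjoint_norm d : norm (adjoint A d) <= opnorm A * norm d.
Proof.
set y := adjoint A d.
have E : norm y ^ 2 = inner d (A y) by rewrite norm_sq /y adjoint_spec.
have H1 := inner_le_norm d (A y). have H2 := opnorm_bound y.
have Hd := norm_nonneg d. have Hy := norm_nonneg y. have Ho := opnorm_nonneg.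
case: (Req_dec (norm y) 0) => Hy0; first by rewrite Hy0; nra.
have : norm d * norm (A y) <= norm d * (opnorm A * norm y) by apply Rmult_le_compat_l.
move=> H3. apply Rmult_le_reg_l with (norm y); nra.
Qed.

End Operators.

Lemma derivable_pt_lim_ext f1 f2 x l1 l2 : derivable_pt_lim f1 x l1 ->
  (forall y, f1 y = f2 y) -> l1 = l2 -> derivable_pt_lim f2 x l2.
Proof.
move=> H E <- e He. have [d Hd] := H e He. exists d => h Hh Hh'. rewrite -!E. by apply Hd.
Qed.

Section Calculus.
Variable V : PreHilbert.
Implicit Types x y p h d v w : V.

Lemma norm_sub_line y s d : norm (sub (add y (scal s d)) y) = Rabs s * norm d.
Proof. rewrite -norm_scal /norm; f_equal. inner_expand. ring. Qed.

Lemma line_deriv (g : V -> R) (G : V -> V) y d s :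
  (forall p, is_gradient_at g p (G p)) ->
  derivable_pt_lim (fun s => g (add y (scal s d))) s (inner (G (add y (scal s d))) d).
Proof.
move=> HG eps Heps.
have Hnd := norm_nonneg d.
have He' : 0 < eps / (2 * (norm d + 1)) by apply Rdiv_lt_0_compat; lra.
have [dl [Hdl Hb]] := HG (add y (scal s d)) _ He'.
have Hdel : 0 < dl / (norm d + 1) by apply Rdiv_lt_0_compat; lra.
exists (mkposreal _ Hdel) => h Hh /= Hhd.
have Hk : norm (scal h d) < dl.
  rewrite norm_scal. have Ha := Rabs_pos h.
  have : Rabs h * (norm d + 1) < dl.
    have -> : dl = dl / (norm d + 1) * (norm d + 1) by field; lra.
    apply Rmult_lt_compat_r; lra.
  nra.
have := Hb _ Hk. rewrite -add_assoc -scal_distr_r inner_scal_r norm_scal => H.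
have Hah : 0 < Rabs h by apply Rabs_pos_lt.
have -> : (g (add y (scal (s + h) d)) - g (add y (scal s d))) / h - inner (G (add y (scal s d))) d
   = (g (add y (scal (s + h) d)) - g (add y (scal s d)) - h * inner (G (add y (scal s d))) d) / h
   by field.
rewrite /Rdiv Rabs_mult Rabs_inv.
apply Rle_lt_trans with (eps / (2 * (norm d + 1)) * norm d).
  apply Rmult_le_reg_r with (Rabs h) => //.
  rewrite Rmult_assoc Rinv_l; lra.
have -> : eps / (2 * (norm d + 1)) * norm d = eps * (norm d / (2 * (norm d + 1))).
  by field; lra.
have : norm d / (2 * (norm d + 1)) < 1.
  apply Rmult_lt_reg_r with (2 * (norm d + 1)); first lra. field_simplify; lra.
move=> H2. have := Rmult_lt_compat_l eps _ _ Heps H2. lra.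
Qed.

Theorem descent_lemma (g : V -> R) (G : V -> V) c :
  (forall p, is_gradient_at g p (G p)) ->
  (forall p q, norm (sub (G p) (G q)) <= c * norm (sub p q)) ->
  forall y d, g (add y d) <= g y + inner (G y) d + c / 2 * norm d ^ 2.
Proof.
move=> HG HL y d.
(* psi is nonincreasing on [0,1] by the mean value theorem *)
set psi := fun s => g (add y (scal s d)) - s * inner (G y) d - c / 2 * s ^ 2 * norm d ^ 2.
set psi' := fun s => inner (G (add y (scal s d))) d - inner (G y) d - c * s * norm d ^ 2.
have Hd : forall s, derivable_pt_lim psi s (psi' s).
  move=> s.
  have H1 := line_deriv y d s HG.
  have H2 := derivable_pt_lim_scal _ (inner (G y) d) _ _ (derivable_pt_lim_id s).
  have H3 := derivable_pt_lim_scal _ (c / 2 * norm d ^ 2) _ _ (derivable_pt_lim_pow s 2).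
  have H4 := derivable_pt_lim_minus _ _ _ _ _ (derivable_pt_lim_minus _ _ _ _ _ H1 H2) H3.
  apply: (derivable_pt_lim_ext H4).
    move=> z. rewrite /psi /minus_fct /mult_real_fct /id. ring.
  rewrite /psi' /=. field.
have [c0 [Hc0 Hc0']] := MVT_cor2 psi psi' 0 1 Rlt_0_1 (fun s _ => Hd s).
have Hneg : psi' c0 <= 0.
  rewrite /psi'.
  have -> : inner (G (add y (scal c0 d))) d - inner (G y) d
      = inner (sub (G (add y (scal c0 d))) (G y)) d by inner_expand; ring.
  have H1 := inner_le_norm (sub (G (add y (scal c0 d))) (G y)) d.
  have H2 := HL (add y (scal c0 d)) y. rewrite norm_sub_line Rabs_right in H2; last lra.
  have Hnd := norm_nonneg d.
  have : norm (sub (G (add y (scal c0 d))) (G y)) * norm d <= c * (c0 * norm d) * norm d.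
    by apply Rmult_le_compat_r.
  lra.
have : psi 1 <= psi 0 by lra.
rewrite /psi scal_1 scal_0 add_0_r. lra.
Qed.

Theorem first_order (g : V -> R) y Gy v : is_gradient_at g y Gy ->
  (forall x, inner v x - g x <= inner v y - g y) -> Gy = v.
Proof.
move=> HG Hmax. symmetry. apply sub_eq0, norm_zero_eq.
set w := sub v Gy.
have Hw := norm_nonneg w.
apply NNPP => Hne. have Hpos : 0 < norm w by lra.
(* a small step t w increases <v,x> - g x *)
have [dl [Hdl Hb]] := HG (norm w / 2) ltac:(lra).
set t := dl / (2 * norm w).
have Ht : 0 < t by apply Rdiv_lt_0_compat; lra.
have Hk : norm (scal t w) < dl.
  rewrite norm_scal Rabs_right; last lra. rewrite /t. field_simplify; lra.
have H1 := Hb _ Hk. have H2 := Hmax (add y (scal t w)).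
have H3 := Rle_abs (g (add y (scal t w)) - g y - inner Gy (scal t w)).
have E : inner v (add y (scal t w)) - inner v y - inner Gy (scal t w) = t * norm w ^ 2.
  rewrite norm_sq /w. inner_expand. ring.
rewrite norm_scal (Rabs_right t) in H1; last lra.
have : 0 < t * norm w * (norm w / 2) by apply Rmult_lt_0_compat; [apply Rmult_lt_0_compat|]; lra.
nra.
Qed.

Theorem gradient_unique (F : V -> R) p v v' :
  is_gradient_at F p v -> is_gradient_at F p v' -> v = v'.
Proof.
move=> H1 H2. apply sub_eq0, norm_zero_eq.
set w := sub v v'. have Hw := norm_nonneg w.
apply NNPP => Hne. have Hpos : 0 < norm w by lra.
(* along a small step t w the two first-order expansions differ by t |w|^2 *)
have [d1 [Hd1 Hb1]] := H1 (norm w / 4) ltac:(lra).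
have [d2 [Hd2 Hb2]] := H2 (norm w / 4) ltac:(lra).
set dl := Rmin d1 d2. have Hdl : 0 < dl by apply Rmin_pos.
set t := dl / (2 * norm w).
have Ht : 0 < t by apply Rdiv_lt_0_compat; lra.
have Hk : norm (scal t w) < dl.
  rewrite norm_scal Rabs_right; last lra. rewrite /t. field_simplify; lra.
have K1 := Hb1 (scal t w) ltac:(have := Rmin_l d1 d2; rewrite -/dl; lra).
have K2 := Hb2 (scal t w) ltac:(have := Rmin_r d1 d2; rewrite -/dl; lra).
rewrite norm_scal (Rabs_right t) in K1 K2; try lra.
have E : inner v (scal t w) - inner v' (scal t w) = t * norm w ^ 2.
  rewrite norm_sq /w. inner_expand. ring.
move: K1 K2 E. set a := F (add p (scal t w)) - F p.
set b1 := inner v (scal t w). set b2 := inner v' (scal t w).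
move=> K1 K2 E.
have := Rle_abs (a - b1). have := Rle_abs (- (a - b1)).
have := Rle_abs (a - b2). have := Rle_abs (- (a - b2)). rewrite !Rabs_Ropp.
have : 0 < t * norm w * (norm w / 2) by apply Rmult_lt_0_compat; [apply Rmult_lt_0_compat|]; lra.
nra.
Qed.

Lemma grad_eq (F : V -> R) p v : is_gradient_at F p v -> grad F p = v.
Proof.
move=> H. rewrite /grad /choose_or.
case: (excluded_middle_informative _) => [Hc|Hc]; last by exfalso; apply Hc; exists v.
case: (constructive_indefinite_description _ _) => y /= Hy. by apply (gradient_unique Hy).
Qed.

Lemma gradient_of_quadratic_remainder (F : V -> R) p v c : 0 < c ->
  (forall h, 0 <= F (add p h) - F p - inner v h <= c * norm h ^ 2) -> is_gradient_at F p v.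
Proof.
move=> Hc H e He. exists (e / c); split; first by apply Rdiv_lt_0_compat.
move=> h Hh. have [H1 H2] := H h. rewrite Rabs_right; last lra.
have Hn := norm_nonneg h.
have : c * norm h ^ 2 <= c * (e / c) * norm h.
  have -> : c * norm h ^ 2 = c * norm h * norm h by ring.
  apply Rmult_le_compat_r => //. apply Rmult_le_compat_l; lra.
have -> : c * (e / c) = e by field; lra. lra.
Qed.

End Calculus.

Definition quad_bounds (V : PreHilbert) (F : V -> R) (G : V -> V) (kappa L : R) : Prop :=
  forall p d, F p + inner (G p) d + kappa / 2 * inner d d <= F (add p d) /\
              F (add p d) <= F p + inner (G p) d + L / 2 * inner d d.

Section QuadraticBounds.
Variables (V : PreHilbert) (F : V -> R) (G : V -> V) (kappa L : R).
Hypotheses (Hk : 0 < kappa) (Hqb : quad_bounds F G kappa L).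
Implicit Types p x y z h : V.

Lemma qb_upper y h : F (add y h) <= F y + inner (G y) h + L / 2 * inner h h.
Proof. exact: proj2 (Hqb y h). Qed.

Lemma qb_lower y z :
  F y + inner (G y) (sub z y) + kappa / 2 * inner (sub z y) (sub z y) <= F z.
Proof. by have := proj1 (Hqb y (sub z y)); rewrite add_sub. Qed.

Lemma qb_lower_linear y h : F y + inner (G y) h <= F (add y h).
Proof.
have := proj1 (Hqb y h).
have : 0 <= kappa / 2 * inner h h by apply Rmult_le_pos; [lra | apply inner_pos].
lra.
Qed.

Lemma qb_grad p : grad F p = G p.
Proof.
apply grad_eq, (@gradient_of_quadratic_remainder _ _ _ _ (Rabs L + 1)).
  by have := Rabs_pos L; lra.
move=> h. rewrite norm_sq. have [K1 K2] := Hqb p h.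
have Hh := inner_pos h. have := Rle_abs L.
have : 0 <= kappa / 2 * inner h h by apply Rmult_le_pos; lra.
nra.
Qed.

Lemma qb_kappa_le_L : (exists h : V, 0 < inner h h) -> kappa <= L.
Proof.
move=> [h Hh]. have [K1 K2] := Hqb zero h.
apply Rmult_le_reg_r with (inner h h / 2); lra.
Qed.

Lemma qb_strongly_convex : strongly_convex kappa (ext_of F).
Proof.
move=> x y t vx vy Ht [<-] [<-]. exists (F (comb t x y)). split => //.
set z := comb t x y.
(* average the lower bounds at z towards x and towards y *)
have K1 := Rmult_le_compat_l t _ _ (proj1 Ht) (qb_lower z x).
have K2 := Rmult_le_compat_l (1 - t) _ _ ltac:(lra) (qb_lower z y).
have E1 : t * inner (G z) (sub x z) + (1 - t) * inner (G z) (sub y z) = 0.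
  rewrite /z. inner_expand. ring.
have E2 : t * inner (sub x z) (sub x z) + (1 - t) * inner (sub y z) (sub y z)
    = t * (1 - t) * norm (sub x y) ^ 2.
  rewrite norm_sq /z. inner_expand. rewrite !(inner_sym y x). ring.
have -> : kappa / 2 * t * (1 - t) * norm (sub x y) ^ 2 = kappa / 2 *
    (t * inner (sub x z) (sub x z) + (1 - t) * inner (sub y z) (sub y z)) by rewrite E2; ring.
lra.
Qed.

(* the two bounds make F locally Lipschitz, hence continuous *)
Lemma qb_continuous : contf F.
Proof.
move=> x e He.
set K := norm (G x) + Rabs L + 1.
have Hg := norm_nonneg (G x). have HaL := Rabs_pos L.
have HK : 0 < K by rewrite /K; lra.
exists (Rmin 1 (e / K)); split; first by apply Rmin_pos; [lra|apply Rdiv_lt_0_compat].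
move=> y Hy. have Hy1 : norm (sub y x) < 1 by have := Rmin_l 1 (e/K); lra.
have Hy2 : norm (sub y x) < e / K by have := Rmin_r 1 (e/K); lra.
set h := sub y x in Hy1 Hy2.
have U := qb_upper x h. have Lo := qb_lower_linear x h.
rewrite /h add_sub -/h -norm_sq in U Lo.
have Hn := norm_nonneg h.
have HL : L / 2 * norm h ^ 2 <= Rabs L * norm h.
  have := Rle_abs L. have : norm h ^ 2 <= norm h by nra. nra.
have CS := cauchy_schwarz (G x) h.
have B : Rabs (F y - F x) <= (norm (G x) + Rabs L) * norm h.
  apply Rabs_le.
  have := Rle_abs (inner (G x) h). have := Rle_abs (- inner (G x) h). rewrite Rabs_Ropp.
  nra.
have : K * norm h < e.
  have -> : e = K * (e / K) by field; lra. by apply Rmult_lt_compat_l.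
have : (norm (G x) + Rabs L) * norm h <= K * norm h by rewrite /K; nra.
lra.
Qed.

Lemma qb_minimizer : complete V -> exists xm, forall p, F xm <= F p.
Proof.
move=> Hcomp.
have Hlsc : lsc (ext_of F).
  move=> C x /= HC. have [d [Hd Hb]] := qb_continuous x (ltac:(lra) : 0 < F x - C).
  exists d; split => // y Hy /=. have := Rabs_def2 _ _ (Hb y Hy). lra.
have [xm [vm [[<-] Hmin]]] :=
  sc_minimizer Hcomp Hk qb_strongly_convex Hlsc (ex_intro _ zero (ex_intro _ (F zero) (Logic.eq_refl _))).
exists xm => p. exact: Hmin p (F p) (Logic.eq_refl _).
Qed.

Section AtMinimizer.
Variable xm : V.
Hypotheses (HL : 0 < L) (Hxm : forall p, F xm <= F p).

(* the gradient step p - G p / L decreases F by |G p|^2 / (2 L) *)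
Lemma qb_grad_sq_bound p : norm (G p) ^ 2 <= 2 * L * (F p - F xm).
Proof.
have := qb_upper p (opp (scal (/ L) (G p))). have := Hxm (add p (opp (scal (/ L) (G p)))).
rewrite norm_sq. inner_expand.
have -> : L / 2 * - - (/ L * (/ L * inner (G p) (G p))) = inner (G p) (G p) / (2 * L).
  by field; lra.
have -> : - (/ L * inner (G p) (G p)) = - (2 * (inner (G p) (G p) / (2 * L))) by field; lra.
move=> H1 H2.
have : inner (G p) (G p) / (2 * L) <= F p - F xm by lra.
move=> /(Rmult_le_compat_l (2 * L) _ _ ltac:(lra)).
by have -> : 2 * L * (inner (G p) (G p) / (2 * L)) = inner (G p) (G p) by field; lra.
Qed.

Lemma qb_min_growth : F xm + kappa / 2 * inner xm xm <= F zero.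
Proof.
have HG : G xm = zero.
  apply norm_zero_eq. have := qb_grad_sq_bound xm. have := pow2_ge_0 (norm (G xm)).
  have := norm_nonneg (G xm). nra.
have := qb_lower xm zero. rewrite HG inner_zero_l.
have -> : inner (sub zero xm) (sub zero xm) = inner xm xm by inner_expand; ring.
lra.
Qed.

End AtMinimizer.
End QuadraticBounds.

Lemma pow_le_exp q k : 0 <= q <= 1 -> (1 - q) ^ k <= exp (- INR k * q).
Proof.
move=> Hq. elim: k => [|k IH]; first by rewrite /= Ropp_0 Rmult_0_l exp_0; lra.
have H1 : 1 - q <= exp (- q).
  case: (Req_dec q 0) => Hq0; first by rewrite Hq0 Ropp_0 exp_0; lra.
  have := exp_ineq1 (- q) ltac:(lra). lra.
rewrite S_INR. have -> : - (INR k + 1) * q = - INR k * q + - q by ring.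
rewrite exp_plus /= Rmult_comm.
apply Rmult_le_compat => //; [apply pow_le; lra | lra].
Qed.

(* Linear convergence of the fast gradient method, via the Lyapunov function
   Phi_k(x) = F(p_k) - F(x) + kappa/2 |v_k - x|^2 with
   v_k = ((1 + q) w_k - p_k) / q, q = sqrt (kappa / L), which contracts by
   the factor 1 - q at each step. *)
Section FastGradient.
Variables (V : PreHilbert) (F : V -> R) (G : V -> V) (L kappa : R).
Hypotheses (Hk : 0 < kappa) (HkL : kappa <= L) (Hqb : quad_bounds F G kappa L).
Implicit Types p w x : V.

Definition Pk k := fst (fgm F L kappa k).
Definition Wk k := snd (fgm F L kappa k).
Definition rate := sqrt kappa / sqrt L.
Definition momentum := (sqrt L - sqrt kappa) / (sqrt L + sqrt kappa).

Definition next_p w := sub w (scal (/ L) (G w)).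
Definition next_w p w := add (next_p w) (scal momentum (sub (next_p w) p)).
Definition estimate p w := scal (/ rate) (sub (scal (1 + rate) w) p).
Definition Phi p w x := F p - F x + kappa / 2 * inner (sub (estimate p w) x) (sub (estimate p w) x).

Lemma fgm_S k : Pk k.+1 = next_p (Wk k) /\ Wk k.+1 = next_w (Pk k) (Wk k).
Proof.
rewrite /Pk /Wk /next_w /next_p /=. case: (fgm F L kappa k) => p w /=.
by rewrite (qb_grad Hk Hqb).
Qed.

Lemma sqrt_facts : 0 < sqrt L /\ 0 < sqrt kappa /\
  L = sqrt L * sqrt L /\ kappa = sqrt kappa * sqrt kappa /\ 0 < rate /\ rate <= 1.
Proof.
have HsL : 0 < sqrt L by apply sqrt_lt_R0; lra.
have Hsk : 0 < sqrt kappa by apply sqrt_lt_R0; lra.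
have HskL : sqrt kappa <= sqrt L by apply sqrt_le_1_alt.
do 2 (split => //). split; first by rewrite sqrt_sqrt; lra.
split; first by rewrite sqrt_sqrt; lra.
split; first by apply Rdiv_lt_0_compat.
rewrite /rate. apply Rmult_le_reg_r with (sqrt L) => //.
rewrite /Rdiv Rmult_assoc Rinv_l; lra.
Qed.

(* (1 - q) Phi(p,w) - Phi(next) splits into five nonnegative terms: the
   descent gap, two lower-bound gaps (at p and at x) and two squares *)
Lemma Phi_step_identity p w x :
  let g := G w in
  (1 - rate) * Phi p w x - Phi (next_p w) (next_w p w) x
  = (F w + inner g (opp (scal (/ L) g))
       + L / 2 * inner (opp (scal (/ L) g)) (opp (scal (/ L) g)) - F (next_p w))
  + (1 - rate) * (F p - (F w + inner g (sub p w) + kappa / 2 * inner (sub p w) (sub p w)))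
  + rate * (F x - (F w + inner g (sub x w) + kappa / 2 * inner (sub x w) (sub x w)))
  + rate * (1 - rate) * (kappa / 2) * inner (sub (estimate p w) w) (sub (estimate p w) w)
  + (1 - rate) * (kappa / 2) * inner (sub p w) (sub p w).
Proof.
move=> g. have [HsL [Hsk [EL [Ek [Hq0 Hq1]]]]] := sqrt_facts.
rewrite /Phi /estimate /next_w /next_p /momentum /rate -/g.
inner_expand.
rewrite ?(inner_sym g w) ?(inner_sym p w) ?(inner_sym x w) ?(inner_sym p g)
  ?(inner_sym x g) ?(inner_sym x p).
move: EL Ek HsL Hsk. set sL := sqrt L. set sk := sqrt kappa. move=> EL Ek HsL Hsk.
rewrite EL Ek. field. lra.
Qed.

Lemma Phi_step k x : Phi (Pk k.+1) (Wk k.+1) x <= (1 - rate) * Phi (Pk k) (Wk k) x.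
Proof.
have [HsL [Hsk [EL [Ek [Hq0 Hq1]]]]] := sqrt_facts.
have [-> ->] := fgm_S k.
set p := Pk k. set w := Wk k.
have EQ := Phi_step_identity p w x. simpl in EQ. set g := G w in EQ.
have S1 : F (next_p w) <= F w + inner g (opp (scal (/ L) g))
    + L / 2 * inner (opp (scal (/ L) g)) (opp (scal (/ L) g)) := qb_upper Hqb w _.
have S2 := qb_lower Hqb w p. have S3 := qb_lower Hqb w x. rewrite -/g in S2 S3.
have N1 := inner_pos (sub (estimate p w) w). have N2 := inner_pos (sub p w).
have T2 : 0 <= (1 - rate) * (F p - (F w + inner g (sub p w) + kappa / 2 * inner (sub p w) (sub p w))).
  apply Rmult_le_pos; lra.
have T3 : 0 <= rate * (F x - (F w + inner g (sub x w) + kappa / 2 * inner (sub x w) (sub x w))).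
  apply Rmult_le_pos; lra.
have T4 : 0 <= rate * (1 - rate) * (kappa / 2) * inner (sub (estimate p w) w) (sub (estimate p w) w).
  apply Rmult_le_pos => //. apply Rmult_le_pos; [apply Rmult_le_pos|]; lra.
have T5 : 0 <= (1 - rate) * (kappa / 2) * inner (sub p w) (sub p w).
  apply Rmult_le_pos => //. apply Rmult_le_pos; lra.
lra.
Qed.

Theorem fgm_rate k x : F (Pk k) - F x <= (1 - rate) ^ k * (F zero - F x + kappa / 2 * inner x x).
Proof.
have [_ [_ [_ [_ [Hq0 Hq1]]]]] := sqrt_facts.
have Hiter : Phi (Pk k) (Wk k) x <= (1 - rate) ^ k * Phi (Pk 0) (Wk 0) x.
  elim: k => [|k IH] /=; first lra.
  have := Phi_step k x. have := Rmult_le_compat_l (1 - rate) _ _ ltac:(lra) IH. lra.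
have E0 : Phi (Pk 0) (Wk 0) x = F zero - F x + kappa / 2 * inner x x.
  rewrite /Phi /estimate /Pk /Wk /=. inner_expand. field. lra.
rewrite E0 in Hiter.
have : 0 <= kappa / 2 * inner (sub (estimate (Pk k) (Wk k)) x) (sub (estimate (Pk k) (Wk k)) x).
  by apply Rmult_le_pos; [lra | apply inner_pos].
rewrite /Phi in Hiter. lra.
Qed.

Theorem fgm_sandwich_estimates (Th : V -> R) D pstar : complete V ->
  (forall p, F p <= Th p <= F p + D) -> (forall p, Th pstar <= Th p) ->
  forall k,
    Th (Pk k) - Th pstar <= D + 2 * (Th zero - Th pstar + D) * exp (- INR k * sqrt (kappa / L))
    /\ norm (grad F (Pk k))
         <= 2 * sqrt (L * (Th zero - Th pstar + D)) * exp (- (INR k / 2) * sqrt (kappa / L)).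
Proof.
move=> Hcomp Hsand Hopt k.
have [HsL [Hsk [EL [Ek [Hq0 Hq1]]]]] := sqrt_facts.
have HL : 0 < L by lra.
have [xm Hxm] := qb_minimizer Hk Hqb Hcomp.
set C := Th zero - Th pstar + D.
have HC : 0 <= C by have := Hsand zero; have := Hsand pstar; have := Hopt zero; rewrite /C; lra.
set e := (1 - rate) ^ k.
have He0 : 0 <= e by apply pow_le; lra.
have Hee : e <= exp (- INR k * sqrt (kappa / L)).
  by rewrite sqrt_div_alt //; apply pow_le_exp; rewrite -/rate; lra.
(* F(p_k) - min F <= 2 e C, using min F + kappa/2 |xm|^2 <= F 0 *)
have Hgap : F (Pk k) - F xm <= 2 * e * C.
  have := fgm_rate k xm. have := qb_min_growth Hqb HL Hxm.
  have : F zero - F xm <= C.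
    have := Hsand zero; have := Hsand xm; have := Hopt xm; rewrite /C; lra.
  have := Rmult_le_pos _ _ He0 (Rmult_le_pos _ _ (Rlt_le _ _ Hk) (inner_pos xm)).
  rewrite -/e. nra.
have HeC := Rmult_le_compat_l _ _ _ (Rmult_le_pos 2 C ltac:(lra) HC) Hee.
split.
  have := Hsand (Pk k). have := Hsand pstar. have := Hxm pstar. rewrite -/C. lra.
(* |G p_k|^2 <= 2 L (F(p_k) - min F) <= 4 L e C *)
rewrite (qb_grad Hk Hqb). apply norm_le_of_sq.
  apply Rmult_le_pos; [apply Rmult_le_pos; [lra|apply sqrt_pos]|apply Rlt_le, exp_pos].
have -> : (2 * sqrt (L * C) * exp (- (INR k / 2) * sqrt (kappa / L))) ^ 2 =
   4 * (L * C) * exp (- INR k * sqrt (kappa / L)).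
  have -> : exp (- INR k * sqrt (kappa / L)) =
      exp (- (INR k / 2) * sqrt (kappa / L)) * exp (- (INR k / 2) * sqrt (kappa / L)).
    by rewrite -exp_plus; f_equal; field.
  have -> : forall a b : R, (2 * a * b) ^ 2 = 4 * (a * a) * (b * b) by move=> a b; ring.
  by rewrite sqrt_sqrt //; apply Rmult_le_pos; lra.
have := qb_grad_sq_bound Hqb HL Hxm (Pk k).
have : 0 <= L * C by apply Rmult_le_pos; lra.
nra.
Qed.

End FastGradient.

Theorem conj_of_smooth_sc (V : PreHilbert) (g : V -> R) (G : V -> V) mu kappa :
  complete V -> 0 < mu -> 0 < kappa ->
  strongly_convex mu (ext_of g) -> lsc (ext_of g) ->
  (forall p, is_gradient_at g p (G p)) ->
  (forall p q, norm (sub (G p) (G q)) <= / kappa * norm (sub p q)) ->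
  forall q, exists x0, forall h,
    fconj (ext_of g) q + inner h x0 + kappa / 2 * norm h ^ 2 <= fconj (ext_of g) (add q h) /\
    fconj (ext_of g) (add q h) <= fconj (ext_of g) q + inner h x0 + norm h ^ 2 / (2 * mu).
Proof.
move=> Hcomp Hmu Hk Hsc Hlsc HG HGL q.
have Hp : proper (ext_of g) by exists zero; eexists.
have [x0 [a [[Ha] [HS [Hb Hsm]]]]] := conj_smooth Hcomp Hmu Hsc Hlsc Hp q.
exists x0 => h. split; last exact: proj2 (Hsm h).
(* x0 maximises <q,x> - g x, so G x0 = q *)
have Gx0 : G x0 = q.
  apply: (first_order (HG x0)) => x. rewrite Ha -HS.
  have := Hb x (g x) (Logic.eq_refl _).
  have : 0 <= mu / 2 * norm (sub x x0) ^ 2 by apply Rmult_le_pos; [lra | apply pow2_ge_0].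
  lra.
(* test the supremum at q + h with the point x0 + kappa h *)
have Dg : g (add x0 (scal kappa h)) <= g x0 + kappa * inner q h + kappa / 2 * inner h h.
  have := descent_lemma HG HGL x0 (scal kappa h). rewrite Gx0 norm_sq. inner_expand.
  move=> D. apply (Rle_trans _ _ _ D). apply Req_le; field; lra.
have [x1 [a1 [_ [_ Hb1]]]] := conj_attained Hcomp Hmu Hsc Hlsc Hp (add q h).
have := Hb1 (add x0 (scal kappa h)) _ (Logic.eq_refl _).
have : 0 <= mu / 2 * norm (sub (add x0 (scal kappa h)) x1) ^ 2.
  by apply Rmult_le_pos; [lra | apply pow2_ge_0].
rewrite HS -Ha (norm_sq h). inner_expand. lra.
Qed.

Section Smoothing.
Variables (H : PreHilbert) (f : extfun H) (rho : R).
Hypotheses (Hcomp : complete H) (Hpf : proper f) (Hcf : convex f) (Hlf : lsc f)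
  (Hbf : bounded_dom f) (Hrho : 0 < rho).

Definition smoothed : extfun H := addc f (fun x => rho / 2 * norm x ^ 2).

Lemma smoothed_sc : strongly_convex rho smoothed.
Proof.
rewrite -(Rplus_0_l rho). apply sc_addc => // x y t Ht.
rewrite norm_comb_sq. apply Req_le; ring.
Qed.

Lemma smoothed_lsc : lsc smoothed.
Proof. exact: lsc_addc Hlf (contf_normsq _). Qed.

Lemma smoothed_proper : proper smoothed.
Proof. exact: proper_addc _ Hpf. Qed.

Lemma conj_rho_smoothed q : conj_rho rho f q = fconj smoothed q.
Proof.
apply Rsup_ext => r; split.
- move=> [x [v [Hv ->]]]. exists x, (v + rho / 2 * norm x ^ 2).
  split; last ring. by rewrite /smoothed /addc Hv.
- move=> [x [v [Hv ->]]]. move: Hv; rewrite /smoothed /addc.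
  case E: (f x) => [u|] // [<-]. exists x, u. split => //. ring.
Qed.

Lemma D_f_bound x : ext_dom f x -> / 2 * norm x ^ 2 <= D_f_const f.
Proof.
have [M HM] := Hbf. move=> Hx. apply Rsup_ub; last by exists x.
exists (/ 2 * M ^ 2) => r [y [Hy ->]]. have := HM y Hy. have := norm_nonneg y.
move=> H1 H2. have : norm y ^ 2 <= M ^ 2 by nra. lra.
Qed.

Lemma conj_rho_sandwich q : conj_rho rho f q <= fconj f q <= conj_rho rho f q + rho * D_f_const f.
Proof.
have [x0 [a [Ha [HS Hb]]]] := conj_attained Hcomp Hrho smoothed_sc smoothed_lsc smoothed_proper q.
have Hup : forall x v, f x = Some v -> inner q x - v <= conj_rho rho f q + rho * D_f_const f.
  move=> x v Hv.
  have := Hb x (v + rho / 2 * norm x ^ 2) ltac:(by rewrite /smoothed /addc Hv).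
  have := D_f_bound (ex_intro _ v Hv). rewrite conj_rho_smoothed.
  have : 0 <= rho / 2 * norm (sub x x0) ^ 2 by apply Rmult_le_pos; [lra | apply pow2_ge_0].
  nra.
split; last first.
  apply Rsup_lub; last by move=> r [x [v [Hv ->]]]; apply Hup.
  have [x [v Hv]] := Hpf. by exists (inner q x - v), x, v.
move: Ha; rewrite /smoothed /addc. case E: (f x0) => [u|] // [Ha].
rewrite conj_rho_smoothed HS -Ha.
apply Rle_trans with (inner q x0 - u).
  have : 0 <= rho / 2 * norm x0 ^ 2 by apply Rmult_le_pos; [lra | apply pow2_ge_0]. lra.
apply Rsup_ub; last by exists x0, u.
by exists (conj_rho rho f q + rho * D_f_const f) => r [x [v [Hv ->]]]; apply Hup.
Qed.

End Smoothing.

Lemma opp_add (V : PreHilbert) (x y : V) : opp (add x y) = add (opp x) (opp y).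
Proof. apply inner_ext => z. inner_expand. ring. Qed.

Section SmoothedDual.
Variables (H : PreHilbert) (m : nat) (f : extfun H) (g : Euclid m -> R)
  (A : H -> Euclid m) (mu kappa rho : R).
Hypotheses (Hcomp : complete H) (Hpf : proper f) (Hcf : convex f) (Hlf : lsc f)
  (Hmu : 0 < mu) (Hlg : lsc (ext_of g)) (Hsg : strongly_convex mu (ext_of g))
  (Hlin : linear_map A) (Hcont : continuous_map A) (Hk : 0 < kappa) (Hrho : 0 < rho).

Lemma conj_rho_adjoint_bounds p : exists v, forall d,
  conj_rho rho f (adjoint A p) + inner d v <= conj_rho rho f (adjoint A (add p d)) /\
  conj_rho rho f (adjoint A (add p d))
    <= conj_rho rho f (adjoint A p) + inner d v + opnorm A ^ 2 / (2 * rho) * norm d ^ 2.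
Proof.
have [x0 [_ [_ [_ [_ Hsm]]]]] := conj_smooth Hcomp Hrho (smoothed_sc Hcf) (smoothed_lsc Hlf)
  (smoothed_proper rho Hpf) (adjoint A p).
exists (A x0) => d. rewrite !conj_rho_smoothed (adjoint_add Hlin Hcont Hcomp p d).
have [L1 U1] := Hsm (adjoint A d). rewrite (adjoint_spec Hlin Hcont Hcomp) in L1 U1.
split => //.
have Hn := adjoint_norm Hlin Hcont Hcomp d. have Hn0 := norm_nonneg (adjoint A d).
have Ho := opnorm_nonneg Hlin Hcont. have Hd0 := norm_nonneg d.
have Hsq : norm (adjoint A d) ^ 2 <= opnorm A ^ 2 * norm d ^ 2.
  rewrite -Rpow_mult_distr. apply pow_incr. lra.
have : norm (adjoint A d) ^ 2 / (2 * rho) <= opnorm A ^ 2 * norm d ^ 2 / (2 * rho).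
  by apply Rmult_le_compat_r => //; apply Rlt_le, Rinv_0_lt_compat; lra.
have -> : opnorm A ^ 2 * norm d ^ 2 / (2 * rho) = opnorm A ^ 2 / (2 * rho) * norm d ^ 2.
  by field; lra.
lra.
Qed.

Hypothesis HG : exists G : Euclid m -> Euclid m,
  (forall p, is_gradient_at g p (G p)) /\
  (forall p q, norm (sub (G p) (G q)) <= / kappa * norm (sub p q)).

Theorem theta_rho_quad_bounds :
  exists Gt, quad_bounds (theta_rho rho f (ext_of g) A) Gt kappa (Lrho A mu rho).
Proof.
have [G [HGg HGL]] := HG.
set thr := theta_rho rho f (ext_of g) A. set L := Lrho A mu rho.
apply (choice (fun p v => forall d, thr p + inner v d + kappa / 2 * inner d d <= thr (add p d)
  /\ thr (add p d) <= thr p + inner v d + L / 2 * inner d d)) => p.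
have [v1 H1] := conj_rho_adjoint_bounds p.
have [v2 H2] := conj_of_smooth_sc (@euclid_complete m) Hmu Hk Hsg Hlg HGg HGL (opp p).
exists (add v1 (opp v2)) => d.
have [A1 B1] := H1 d. have [A2 B2] := H2 (opp d).
rewrite -opp_add norm_opp in A2 B2.
rewrite /thr /theta_rho inner_add_l inner_opp_l (inner_sym v1 d) (inner_sym v2 d).
have Eo : inner (opp d) v2 = - inner d v2 by inner_expand.
rewrite Eo norm_sq in A2 B2. rewrite norm_sq in B1.
have -> : L / 2 * inner d d
    = opnorm A ^ 2 / (2 * rho) * inner d d + inner d d / (2 * mu) by rewrite /L /Lrho; field; lra.
lra.
Qed.

End SmoothedDual.

Theorem mainTheorem9
  (H : PreHilbert) (m : nat)
  (f : extfun H) (g : Euclid m -> R) (A : H -> Euclid m)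
  (mu kappa rho : R) (pstar : Euclid m) :
  (* standing assumptions *)
  is_Hilbert H ->
  proper f -> convex f -> lsc f -> bounded_dom f ->
  0 < mu -> proper (ext_of g) -> lsc (ext_of g) -> strongly_convex mu (ext_of g) ->
  linear_map A -> continuous_map A ->
  (exists x, ext_dom f x /\ ext_dom (ext_of g) (A x)) ->
  (* g real-valued, differentiable with (1/kappa)-Lipschitz gradient *)
  0 < kappa ->
  (exists G : Euclid m -> Euclid m,
      (forall p, is_gradient_at g p (G p)) /\
      (forall p q, norm (sub (G p) (G q)) <= / kappa * norm (sub p q))) ->
  (* p* is an optimal solution of (D), i.e. a minimizer of theta *)
  (forall p, theta f (ext_of g) A pstar <= theta f (ext_of g) A p) ->
  0 < rho ->
  let th := theta f (ext_of g) A in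
  let thr := theta_rho rho f (ext_of g) A in
  let L := Lrho A mu rho in
  let Df := D_f_const f in
  forall k : nat,
    let pk := fst (fgm thr L kappa k) in
    th pk - th pstar
      <= rho * Df + 2 * (th zero - th pstar + rho * Df)
                      * exp (- INR k * sqrt (kappa / L))
    /\
    norm (grad thr pk)
      <= 2 * sqrt (L * (th zero - th pstar + rho * Df))
           * exp (- (INR k / 2) * sqrt (kappa / L)).
Proof.
move=> Hcomp Hpf Hcf Hlf Hbf Hmu _ Hlg Hsg Hlin Hcont _ Hk HG Hopt Hrho th thr L Df k pk.
have Hsand : forall p, thr p <= th p <= thr p + rho * Df.
  move=> p. have := conj_rho_sandwich Hcomp Hpf Hcf Hlf Hbf Hrho (adjoint A p).
  rewrite /thr /th /Df /theta /theta_rho. lra.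
have [Gt Hqb] := theta_rho_quad_bounds Hcomp Hpf Hcf Hlf Hmu Hlg Hsg Hlin Hcont Hk Hrho HG.
case: (posnP m) => [Hm0|Hm].
- (* R^0 is a single point: both estimates are trivial *)
  have := Hsand pstar. have := Hopt zero. rewrite -/th => H1 H2.
  have -> : pk = pstar by apply euclid0_eq.
  rewrite (euclid0_eq (grad thr pstar) zero Hm0) norm_zero.
  split; first by have := exp_pos (- INR k * sqrt (kappa / L)); nra.
  apply Rmult_le_pos; last by apply Rlt_le, exp_pos.
  have := sqrt_pos (L * (th zero - th pstar + rho * Df)). lra.
- have HkL := qb_kappa_le_L Hqb (euclid_nonzero Hm).
  exact (fgm_sandwich_estimates Hk HkL Hqb (@euclid_complete m) Hsand Hopt k).
Qed.
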